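(* For all complex $q$ with $|q|<1$, $$F^{\rm od}_{\rm ed}(q)=\frac{q\,(-q;q^2)_\infty}{1-q}\left(1-\frac{(-q^2;q^2)_\infty}{(-q;q^2)_\infty}\right).$$
   Context: For $n\in\mathbb N_0\cup\{\infty\}$, $(a;q)_n:=\prod_{j=0}^{n-1}(1-aq^j)$. Define $$F^{\rm od}_{\rm ed}(q):=\sum_{n=0}^\infty q^{2n+2}(-q^2;q^2)_n(-q^{2n+3};q^2)_\infty,$$ the generating function for partitions into at least one even part, with even parts distinct, and odd parts distinct and all larger than every even part. *)

From Stdlib Require Import Reals ClassicalEpsilon.
Open Scope R_scope.

Definition Cx : Type := (R * R)%type.
Definition Czero : Cx := (0, 0).
Definition Cone : Cx := (1, 0).
Definition Cadd (z w : Cx) : Cx := (fst z + fst w, snd z + snd w).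
Definition Copp (z : Cx) : Cx := (- fst z, - snd z).
Definition Csub (z w : Cx) : Cx := Cadd z (Copp w).
Definition Cmul (z w : Cx) : Cx :=
  (fst z * fst w - snd z * snd w, fst z * snd w + snd z * fst w).
Definition Cinv (z : Cx) : Cx :=
  (fst z / (fst z ^ 2 + snd z ^ 2), - snd z / (fst z ^ 2 + snd z ^ 2)).
Definition Cdiv (z w : Cx) : Cx := Cmul z (Cinv w).
Definition Cnorm (z : Cx) : R := sqrt (fst z ^ 2 + snd z ^ 2).
Fixpoint Cpow (z : Cx) (n : nat) : Cx :=
  match n with O => Cone | S m => Cmul z (Cpow z m) end.

(* Convergence of a complex sequence, and its limit (junk value if none). *)
Definition Ccv (u : nat -> Cx) (l : Cx) : Prop :=
  forall eps : R, 0 < eps -> exists N : nat, forall n : nat, (n >= N)%nat ->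
    Cnorm (Csub (u n) l) < eps.
Definition Clim (u : nat -> Cx) : Cx := epsilon (A := Cx) (inhabits Czero) (fun l => Ccv u l).

Fixpoint Csum (f : nat -> Cx) (n : nat) : Cx :=
  match n with O => Czero | S m => Cadd (Csum f m) (f m) end.

Fixpoint qpoch (a q : Cx) (n : nat) : Cx :=
  match n with O => Cone | S m => Cmul (qpoch a q m) (Csub Cone (Cmul a (Cpow q m))) end.
Definition qpoch_inf (a q : Cx) : Cx := Clim (fun n => qpoch a q n).

Definition Fod_ed_term (q : Cx) (n : nat) : Cx :=
  Cmul (Cpow q (2 * n + 2))
       (Cmul (qpoch (Copp (Cpow q 2)) (Cpow q 2) n)
             (qpoch_inf (Copp (Cpow q (2 * n + 3))) (Cpow q 2))).

(* Put R_n := (-q^2;q^2)_n (-q^{2n+1};q^2)_oo.  Since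
   R_n - R_{n+1} = (-q^2;q^2)_n (-q^{2n+3};q^2)_oo ((1 + q^{2n+1}) - (1 + q^{2n+2})),
   the n-th summand times (1 - q) is q (R_n - R_{n+1}), so (1 - q) times the N-th
   partial sum telescopes to q (R_0 - R_N), where R_0 = (-q;q^2)_oo and
   R_N -> (-q^2;q^2)_oo because the tails (a p^N; p)_oo tend to 1.  The products
   converge by the geometric Cauchy bound |(a;p)_{m+k} - (a;p)_m| <= e^s s |p|^m
   with s = |a|/(1-|p|); the same tail estimate shows (-q;q^2)_oo <> 0, which the
   closed form of the limit divides by. *)

From Stdlib Require Import Reals Lra Lia ClassicalEpsilon.
From Coquelicot Require Complex.
Open Scope R_scope.

(* [Cx] and its operations are definitionally Coquelicot's [C]. *)
Lemma Cx_field : field_theory Czero Cone Cadd Cmul Csub Copp Cdiv Cinv (@eq Cx).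
Proof. exact Complex.C_field_theory. Qed.
Add Field CxField : Cx_field.

Lemma Cnorm_ge0 z : 0 <= Cnorm z.
Proof. exact (Complex.Cmod_ge_0 z). Qed.
Lemma Cnorm_mul z w : Cnorm (Cmul z w) = Cnorm z * Cnorm w.
Proof. exact (Complex.Cmod_mult z w). Qed.
Lemma Cnorm_add z w : Cnorm (Cadd z w) <= Cnorm z + Cnorm w.
Proof. exact (Complex.Cmod_triangle z w). Qed.
Lemma Cnorm_opp z : Cnorm (Copp z) = Cnorm z.
Proof. exact (Complex.Cmod_opp z). Qed.
Lemma Cnorm_zero : Cnorm Czero = 0.
Proof. exact Complex.Cmod_0. Qed.
Lemma Cnorm_one : Cnorm Cone = 1.
Proof. exact Complex.Cmod_1. Qed.
Lemma Cnorm_pow z n : Cnorm (Cpow z n) = Cnorm z ^ n.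
Proof. exact (Complex.Cmod_pow z n). Qed.
Lemma Cnorm_gt0 z : z <> Czero -> 0 < Cnorm z.
Proof. exact (proj1 (Complex.Cmod_gt_0 z)). Qed.

Lemma Cnorm_sub z w : Cnorm (Csub z w) <= Cnorm z + Cnorm w.
Proof. unfold Csub. rewrite <- (Cnorm_opp w). apply Cnorm_add. Qed.
Lemma Cnorm_sub_sym z w : Cnorm (Csub z w) = Cnorm (Csub w z).
Proof. replace (Csub z w) with (Copp (Csub w z)) by ring. apply Cnorm_opp. Qed.
Lemma Cnorm_sub_triangle a b c : Cnorm (Csub a c) <= Cnorm (Csub a b) + Cnorm (Csub b c).
Proof. replace (Csub a c) with (Cadd (Csub a b) (Csub b c)) by ring. apply Cnorm_add. Qed.
Lemma Cnorm_one_sub_ge z : 1 - Cnorm z <= Cnorm (Csub Cone z).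
Proof.
  pose proof (Cnorm_add (Csub Cone z) z) as H.
  replace (Cadd (Csub Cone z) z) with Cone in H by ring. rewrite Cnorm_one in H. lra.
Qed.

Lemma Rabs_fst_sub_le z w : Rabs (fst z - fst w) <= Cnorm (Csub z w).
Proof.
  eapply Rle_trans; [|apply Complex.Rmax_Cmod]. eapply Rle_trans; [|apply Rmax_l]. now right.
Qed.
Lemma Rabs_snd_sub_le z w : Rabs (snd z - snd w) <= Cnorm (Csub z w).
Proof.
  eapply Rle_trans; [|apply Complex.Rmax_Cmod]. eapply Rle_trans; [|apply Rmax_r]. now right.
Qed.
Lemma Cnorm_sub_le_components z w :
  Cnorm (Csub z w) <= Rabs (fst z - fst w) + Rabs (snd z - snd w).
Proof.
  destruct z as [a b], w as [c d]. unfold Cnorm, Csub, Cadd, Copp; cbn [fst snd].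
  set (x := a + - c); set (y := b + - d).
  replace (a - c) with x by (unfold x; ring). replace (b - d) with y by (unfold y; ring).
  pose proof (Rabs_pos x); pose proof (Rabs_pos y).
  rewrite <- (sqrt_pow2 (Rabs x + Rabs y)) by lra.
  apply sqrt_le_1_alt. rewrite <- (pow2_abs x), <- (pow2_abs y). nra.
Qed.

Lemma Cpow_add z m n : Cpow z (m + n) = Cmul (Cpow z m) (Cpow z n).
Proof. induction m as [|m IH]; simpl; [ring | rewrite IH; ring]. Qed.
Lemma Cpow_mul z m n : Cpow z (m * n) = Cpow (Cpow z m) n.
Proof.
  induction n as [|n IH]; [now rewrite Nat.mul_0_r|].
  replace (m * S n)%nat with (m + m * n)%nat by lia. now rewrite Cpow_add, IH.
Qed.

Lemma geometric_eventually_lt C rho eps : 0 <= rho < 1 -> 0 < eps ->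
  exists N, forall n, (n >= N)%nat -> C * rho ^ n < eps.
Proof.
  intros Hrho Heps. pose proof (Rabs_pos C).
  destruct (pow_lt_1_zero rho ltac:(rewrite Rabs_right; lra) (eps / (Rabs C + 1)))
    as [N HN]; [apply Rdiv_lt_0_compat; lra|].
  exists N. intros n Hn. specialize (HN n Hn).
  rewrite Rabs_right in HN by (apply Rle_ge, pow_le; lra).
  pose proof (pow_le rho n ltac:(lra)).
  apply (Rmult_lt_compat_l (Rabs C + 1)) in HN; [|lra].
  replace ((Rabs C + 1) * (eps / (Rabs C + 1))) with eps in HN by (field; lra).
  pose proof (Rle_abs C). nra.
Qed.

Lemma exp_le_exp x y : x <= y -> exp x <= exp y.
Proof. intros [H|H]; [left; now apply exp_increasing | now rewrite H; right]. Qed.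

Lemma Cmul_neq0 z w : z <> Czero -> w <> Czero -> Cmul z w <> Czero.
Proof.
  intros Hz Hw E. apply Cnorm_gt0 in Hz, Hw.
  assert (H := Cnorm_mul z w). rewrite E, Cnorm_zero in H. nra.
Qed.

Lemma Ccv_components u l : Ccv u l <->
  Un_cv (fun n => fst (u n)) (fst l) /\ Un_cv (fun n => snd (u n)) (snd l).
Proof.
  split.
  - intros H; split; intros eps Heps; destruct (H eps Heps) as [N HN];
      exists N; intros n Hn; specialize (HN n Hn); unfold R_dist.
    + eapply Rle_lt_trans; [apply Rabs_fst_sub_le | exact HN].
    + eapply Rle_lt_trans; [apply Rabs_snd_sub_le | exact HN].
  - intros [H1 H2] eps Heps.
    destruct (H1 (eps / 2)) as [N1 HN1]; [lra|].
    destruct (H2 (eps / 2)) as [N2 HN2]; [lra|].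
    exists (N1 + N2)%nat. intros n Hn.
    specialize (HN1 n ltac:(lia)); specialize (HN2 n ltac:(lia)). unfold R_dist in *.
    pose proof (Cnorm_sub_le_components (u n) l). lra.
Qed.

Lemma Ccv_unique u l1 l2 : Ccv u l1 -> Ccv u l2 -> l1 = l2.
Proof.
  rewrite !Ccv_components. intros [H1 H2] [H1' H2'].
  destruct l1, l2. cbn in *. f_equal; eapply UL_sequence; eassumption.
Qed.

Lemma Clim_eq u l : Ccv u l -> Clim u = l.
Proof.
  intro H. apply (Ccv_unique u); [|exact H].
  apply (epsilon_spec (inhabits Czero) (fun l => Ccv u l)). now exists l.
Qed.

Lemma Ccv_ext u v l : (forall n, u n = v n) -> Ccv u l -> Ccv v l.
Proof. intros E H eps Heps. destruct (H eps Heps) as [N HN]. exists N. intros. rewrite <- E. auto. Qed.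

Lemma Ccv_shift u l m : Ccv u l -> Ccv (fun n => u (m + n)%nat) l.
Proof. intros H eps Heps. destruct (H eps Heps) as [N HN]. exists N. intros. apply HN; lia. Qed.

Lemma Ccv_const c : Ccv (fun _ => c) c.
Proof.
  intros eps Heps. exists O. intros. replace (Csub c c) with Czero by ring.
  now rewrite Cnorm_zero.
Qed.

Lemma Ccv_sub u v l m : Ccv u l -> Ccv v m -> Ccv (fun n => Csub (u n) (v n)) (Csub l m).
Proof.
  rewrite !Ccv_components. intros [Hu1 Hu2] [Hv1 Hv2].
  split; [exact (CV_minus _ _ _ _ Hu1 Hv1) | exact (CV_minus _ _ _ _ Hu2 Hv2)].
Qed.

Lemma Ccv_mul u v l m : Ccv u l -> Ccv v m -> Ccv (fun n => Cmul (u n) (v n)) (Cmul l m).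
Proof.
  rewrite !Ccv_components. intros [Hu1 Hu2] [Hv1 Hv2]. split.
  - exact (CV_minus _ _ _ _ (CV_mult _ _ _ _ Hu1 Hv1) (CV_mult _ _ _ _ Hu2 Hv2)).
  - exact (CV_plus _ _ _ _ (CV_mult _ _ _ _ Hu1 Hv2) (CV_mult _ _ _ _ Hu2 Hv1)).
Qed.

Lemma Ccv_dist_le u l c b : Ccv u l -> (forall n, Cnorm (Csub (u n) c) <= b) ->
  Cnorm (Csub l c) <= b.
Proof.
  intros H Hb. apply Rnot_lt_le. intro Hlt.
  destruct (H (Cnorm (Csub l c) - b)) as [N HN]; [lra|].
  specialize (HN N (le_n N)). specialize (Hb N).
  pose proof (Cnorm_sub_triangle l (u N) c). rewrite (Cnorm_sub_sym l (u N)) in *. lra.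
Qed.

Lemma Ccv_of_geometric_bound u l K rho : 0 <= rho < 1 ->
  (forall n, Cnorm (Csub (u n) l) <= K * rho ^ n) -> Ccv u l.
Proof.
  intros Hrho Hb eps Heps. destruct (geometric_eventually_lt K rho eps Hrho Heps) as [N HN].
  exists N. intros n Hn. eapply Rle_lt_trans; [apply Hb | now apply HN].
Qed.

Lemma Ccv_of_geometric_cauchy u K rho : 0 <= rho < 1 ->
  (forall m k, Cnorm (Csub (u (m + k)%nat) (u m)) <= K * rho ^ m) -> exists l, Ccv u l.
Proof.
  intros Hrho Hb.
  assert (Hcauchy : forall eps, 0 < eps -> exists N, forall n m, (n >= N)%nat -> (m >= N)%nat ->
            Cnorm (Csub (u n) (u m)) < eps).
  { intros eps Heps. destruct (geometric_eventually_lt K rho eps Hrho Heps) as [N HN].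
    exists N. intros n m Hn Hm.
    destruct (Nat.le_ge_cases n m) as [Hnm|Hmn].
    - rewrite Cnorm_sub_sym. replace m with (n + (m - n))%nat by lia.
      eapply Rle_lt_trans; [apply Hb | now apply HN].
    - replace n with (m + (n - m))%nat by lia.
      eapply Rle_lt_trans; [apply Hb | now apply HN]. }
  assert (C1 : Cauchy_crit (fun n => fst (u n))).
  { intros eps Heps. destruct (Hcauchy eps Heps) as [N HN]. exists N. intros n m Hn Hm.
    eapply Rle_lt_trans; [apply Rabs_fst_sub_le | now apply HN]. }
  assert (C2 : Cauchy_crit (fun n => snd (u n))).
  { intros eps Heps. destruct (Hcauchy eps Heps) as [N HN]. exists N. intros n m Hn Hm.
    eapply Rle_lt_trans; [apply Rabs_snd_sub_le | now apply HN]. }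
  destruct (R_complete _ C1) as [l1 H1], (R_complete _ C2) as [l2 H2].
  exists (l1, l2). now apply Ccv_components.
Qed.

Lemma Csum_telescope f g c d N :
  (forall n, Cmul (f n) c = Cmul d (Csub (g n) (g (S n)))) ->
  Cmul (Csum f N) c = Cmul d (Csub (g O) (g N)).
Proof.
  intro Hstep. induction N as [|N IH]; simpl; [ring|].
  transitivity (Cadd (Cmul (Csum f N) c) (Cmul (f N) c)); [ring|].
  rewrite IH, Hstep. ring.
Qed.

Lemma qpoch_add a p m k :
  qpoch a p (m + k) = Cmul (qpoch a p m) (qpoch (Cmul a (Cpow p m)) p k).
Proof.
  induction k as [|k IH]; [rewrite Nat.add_0_r; simpl; ring|].
  rewrite Nat.add_succ_r. simpl. rewrite IH, Cpow_add. ring.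
Qed.

Lemma qpoch_neq0 a p n : (forall j, Csub Cone (Cmul a (Cpow p j)) <> Czero) ->
  qpoch a p n <> Czero.
Proof.
  intros Hfac.
  enough (0 < Cnorm (qpoch a p n)) by (intros E; rewrite E, Cnorm_zero in *; lra).
  induction n as [|n IH]; simpl qpoch; [rewrite Cnorm_one; lra|].
  rewrite Cnorm_mul. apply Rmult_lt_0_compat; [exact IH | apply Cnorm_gt0, Hfac].
Qed.

(* [sum_j |a p^j|]: it bounds [log |(a;p)_n|] and the distance of [(a;p)_oo] from 1. *)
Definition qpoch_mass (a p : Cx) : R := Cnorm a / (1 - Cnorm p).

Section QPochhammerLimit.
Variables (a p : Cx).
Hypothesis hp : Cnorm p < 1.

Lemma qpoch_mass_ge0 : 0 <= qpoch_mass a p.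
Proof. unfold qpoch_mass. pose proof (Cnorm_ge0 a). apply Rmult_le_pos; [lra | apply Rlt_le, Rinv_0_lt_compat; lra]. Qed.

Lemma qpoch_norm_le m : Cnorm (qpoch a p m) <= exp (qpoch_mass a p).
Proof.
  pose proof (Cnorm_ge0 p) as Hr. pose proof (Cnorm_ge0 a) as Ha.
  assert (Hpart : forall m,
    Cnorm (qpoch a p m) <= exp (Cnorm a * (1 - Cnorm p ^ m) / (1 - Cnorm p))).
  { induction m0 as [|m0 IH]; simpl qpoch.
    - rewrite Cnorm_one. replace (Cnorm a * (1 - Cnorm p ^ 0) / (1 - Cnorm p)) with 0 by (simpl; field; lra).
      rewrite exp_0. lra.
    - rewrite Cnorm_mul.
      replace (Cnorm a * (1 - Cnorm p ^ S m0) / (1 - Cnorm p)) with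
        (Cnorm a * (1 - Cnorm p ^ m0) / (1 - Cnorm p) + Cnorm a * Cnorm p ^ m0)
        by (simpl; field; lra).
      rewrite exp_plus. apply Rmult_le_compat; try apply Cnorm_ge0; [exact IH|].
      eapply Rle_trans; [apply Cnorm_sub|].
      rewrite Cnorm_one, Cnorm_mul, Cnorm_pow. apply exp_ineq1_le. }
  eapply Rle_trans; [apply Hpart|]. apply exp_le_exp. unfold qpoch_mass.
  pose proof (pow_le (Cnorm p) m Hr).
  apply Rmult_le_compat_r; [apply Rlt_le, Rinv_0_lt_compat; lra | nra].
Qed.

Lemma qpoch_cauchy_bound m k : Cnorm (Csub (qpoch a p (m + k)) (qpoch a p m)) <=
  exp (qpoch_mass a p) * qpoch_mass a p * Cnorm p ^ m.
Proof.
  pose proof (Cnorm_ge0 p) as Hr. pose proof (Cnorm_ge0 a) as Ha.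
  set (E := exp (qpoch_mass a p)). assert (HE : 0 < E) by apply exp_pos.
  assert (Htelescope : Cnorm (Csub (qpoch a p (m + k)) (qpoch a p m)) <=
            E * Cnorm a * (Cnorm p ^ m - Cnorm p ^ (m + k)) / (1 - Cnorm p)).
  { induction k as [|k IH].
    - rewrite Nat.add_0_r. replace (Csub (qpoch a p m) (qpoch a p m)) with Czero by ring.
      rewrite Cnorm_zero. right. field. lra.
    - rewrite Nat.add_succ_r.
      eapply Rle_trans; [apply (Cnorm_sub_triangle _ (qpoch a p (m + k)))|].
      replace (Csub (qpoch a p (S (m + k))) (qpoch a p (m + k))) with
        (Copp (Cmul (qpoch a p (m + k)) (Cmul a (Cpow p (m + k))))) by (simpl; ring).
      rewrite Cnorm_opp, !Cnorm_mul, Cnorm_pow.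
      replace (E * Cnorm a * (Cnorm p ^ m - Cnorm p ^ S (m + k)) / (1 - Cnorm p)) with
        (E * (Cnorm a * Cnorm p ^ (m + k)) +
         E * Cnorm a * (Cnorm p ^ m - Cnorm p ^ (m + k)) / (1 - Cnorm p))
        by (simpl; field; lra).
      apply Rplus_le_compat; [|exact IH].
      apply Rmult_le_compat_r; [apply Rmult_le_pos; auto using pow_le | apply qpoch_norm_le]. }
  eapply Rle_trans; [exact Htelescope|]. unfold qpoch_mass.
  pose proof (pow_le (Cnorm p) (m + k) Hr).
  assert (0 < / (1 - Cnorm p)) by (apply Rinv_0_lt_compat; lra).
  assert (0 <= E * Cnorm a * / (1 - Cnorm p) * Cnorm p ^ (m + k))
    by (repeat apply Rmult_le_pos; lra).
  unfold Rdiv. nra.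
Qed.

Lemma qpoch_inf_spec : Ccv (qpoch a p) (qpoch_inf a p).
Proof.
  destruct (Ccv_of_geometric_cauchy (qpoch a p) _ (Cnorm p)
              (conj (Cnorm_ge0 p) hp) qpoch_cauchy_bound) as [l Hl].
  unfold qpoch_inf. now rewrite (Clim_eq (fun n => qpoch a p n) l Hl).
Qed.

Lemma qpoch_inf_dist1_le :
  Cnorm (Csub (qpoch_inf a p) Cone) <= exp (qpoch_mass a p) * qpoch_mass a p.
Proof.
  apply (Ccv_dist_le (qpoch a p)); [exact qpoch_inf_spec|].
  intro m. rewrite <- (Rmult_1_r (_ * _)), <- (pow_O (Cnorm p)).
  exact (qpoch_cauchy_bound 0 m).
Qed.

End QPochhammerLimit.

Lemma qpoch_inf_add a p m : Cnorm p < 1 ->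
  qpoch_inf a p = Cmul (qpoch a p m) (qpoch_inf (Cmul a (Cpow p m)) p).
Proof.
  intro hp. apply (Ccv_unique (fun n => qpoch a p (m + n)%nat)).
  - apply Ccv_shift, qpoch_inf_spec, hp.
  - apply (Ccv_ext (fun n => Cmul (qpoch a p m) (qpoch (Cmul a (Cpow p m)) p n))).
    + intro n. symmetry. apply qpoch_add.
    + apply Ccv_mul; [apply Ccv_const | apply qpoch_inf_spec, hp].
Qed.

Lemma qpoch_inf_S a p : Cnorm p < 1 ->
  qpoch_inf a p = Cmul (Csub Cone a) (qpoch_inf (Cmul a p) p).
Proof.
  intro hp. rewrite (qpoch_inf_add a p 1 hp). simpl.
  replace (Cmul p Cone) with p by ring. f_equal. ring.
Qed.

Lemma qpoch_mass_mul_pow a p n :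
  qpoch_mass (Cmul a (Cpow p n)) p = qpoch_mass a p * Cnorm p ^ n.
Proof. unfold qpoch_mass. rewrite Cnorm_mul, Cnorm_pow. unfold Rdiv. ring. Qed.

Lemma qpoch_inf_tail_cv a p : Cnorm p < 1 ->
  Ccv (fun n => qpoch_inf (Cmul a (Cpow p n)) p) Cone.
Proof.
  intro hp. pose proof (Cnorm_ge0 p) as Hr. pose proof (qpoch_mass_ge0 a p hp) as Hs.
  apply (Ccv_of_geometric_bound _ _ (exp (qpoch_mass a p) * qpoch_mass a p) (Cnorm p));
    [split; lra|].
  intro n. eapply Rle_trans; [apply qpoch_inf_dist1_le, hp|].
  rewrite qpoch_mass_mul_pow, Rmult_assoc.
  assert (Hpow : Cnorm p ^ n <= 1) by (rewrite <- (pow1 n); apply pow_incr; lra).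
  pose proof (pow_le (Cnorm p) n Hr).
  apply Rmult_le_compat; [apply Rlt_le, exp_pos | nra | apply exp_le_exp; nra | lra].
Qed.

Lemma qpoch_inf_neq0 a p : Cnorm p < 1 ->
  (forall j, Csub Cone (Cmul a (Cpow p j)) <> Czero) -> qpoch_inf a p <> Czero.
Proof.
  intros hp Hfac.
  destruct (qpoch_inf_tail_cv a p hp 1 Rlt_0_1) as [J HJ]. specialize (HJ J (le_n J)).
  rewrite (qpoch_inf_add a p J hp).
  apply Cmul_neq0; [now apply qpoch_neq0|].
  intro E. rewrite E in HJ.
  replace (Csub Czero Cone) with (Copp Cone) in HJ by ring.
  rewrite Cnorm_opp, Cnorm_one in HJ. lra.
Qed.

Definition Fod_ed_remainder (q : Cx) (n : nat) : Cx :=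
  Cmul (qpoch (Copp (Cpow q 2)) (Cpow q 2) n)
       (qpoch_inf (Cmul (Copp q) (Cpow (Cpow q 2) n)) (Cpow q 2)).

Section FodEd.
Variable q : Cx.
Hypothesis hq : Cnorm q < 1.

Lemma Cnorm_sq_lt1 : Cnorm (Cpow q 2) < 1.
Proof. rewrite Cnorm_pow. pose proof (Cnorm_ge0 q). nra. Qed.

Lemma Fod_ed_term_telescope n : Cmul (Fod_ed_term q n) (Csub Cone q) =
  Cmul q (Csub (Fod_ed_remainder q n) (Fod_ed_remainder q (S n))).
Proof.
  unfold Fod_ed_term, Fod_ed_remainder.
  replace (Copp (Cpow q (2 * n + 3))) with (Cmul (Copp q) (Cpow (Cpow q 2) (S n))).
  2:{ rewrite <- Cpow_mul. replace (2 * n + 3)%nat with (1 + 2 * S n)%nat by lia.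
      rewrite Cpow_add. simpl Cpow at 2. ring. }
  replace (Cpow q (2 * n + 2)) with (Cpow (Cpow q 2) (S n)).
  2:{ rewrite <- Cpow_mul. f_equal. lia. }
  rewrite (qpoch_inf_S (Cmul (Copp q) (Cpow (Cpow q 2) n)) _ Cnorm_sq_lt1).
  replace (Cmul (Cmul (Copp q) (Cpow (Cpow q 2) n)) (Cpow q 2))
    with (Cmul (Copp q) (Cpow (Cpow q 2) (S n))) by (simpl; ring).
  simpl. ring.
Qed.

Lemma Fod_ed_remainder_0 : Fod_ed_remainder q 0 = qpoch_inf (Copp q) (Cpow q 2).
Proof. unfold Fod_ed_remainder. simpl. replace (Cmul (Copp q) Cone) with (Copp q); ring. Qed.

Lemma Fod_ed_remainder_cv :
  Ccv (Fod_ed_remainder q) (Cmul (qpoch_inf (Copp (Cpow q 2)) (Cpow q 2)) Cone).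
Proof.
  apply Ccv_mul; [apply qpoch_inf_spec | apply qpoch_inf_tail_cv]; exact Cnorm_sq_lt1.
Qed.

Lemma qpoch_inf_oppq_neq0 : qpoch_inf (Copp q) (Cpow q 2) <> Czero.
Proof.
  apply qpoch_inf_neq0; [exact Cnorm_sq_lt1|]. intros j E.
  pose proof (Cnorm_one_sub_ge (Cmul (Copp q) (Cpow (Cpow q 2) j))) as H.
  rewrite E, Cnorm_zero, Cnorm_mul, Cnorm_opp, !Cnorm_pow in H.
  pose proof (Cnorm_ge0 q).
  assert ((Cnorm q ^ 2) ^ j <= 1) by (rewrite <- (pow1 j); apply pow_incr; nra).
  pose proof (pow_le (Cnorm q ^ 2) j ltac:(nra)). nra.
Qed.

End FodEd.

Theorem theorem1p1 (q : Cx) (hq : Cnorm q < 1) :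
  Ccv (fun N => Csum (Fod_ed_term q) N)
      (Cmul (Cdiv (Cmul q (qpoch_inf (Copp q) (Cpow q 2))) (Csub Cone q))
            (Csub Cone (Cdiv (qpoch_inf (Copp (Cpow q 2)) (Cpow q 2))
                           (qpoch_inf (Copp q) (Cpow q 2))))).
Proof.
  set (A := qpoch_inf (Copp q) (Cpow q 2)).
  set (B := qpoch_inf (Copp (Cpow q 2)) (Cpow q 2)).
  assert (HA : A <> Czero) by exact (qpoch_inf_oppq_neq0 q hq).
  assert (H1q : Csub Cone q <> Czero).
  { intro E. pose proof (Cnorm_one_sub_ge q). rewrite E, Cnorm_zero in *. lra. }
  assert (Hsum : forall N, Csum (Fod_ed_term q) N =
            Cmul (Cdiv q (Csub Cone q)) (Csub A (Fod_ed_remainder q N))).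
  { intro N. pose proof (Csum_telescope _ _ _ _ N (Fod_ed_term_telescope q hq)) as E.
    rewrite Fod_ed_remainder_0 in E. fold A in E.
    transitivity (Cdiv (Cmul (Csum (Fod_ed_term q) N) (Csub Cone q)) (Csub Cone q));
      [field; exact H1q | rewrite E; field; exact H1q]. }
  replace (Cmul (Cdiv (Cmul q A) (Csub Cone q)) (Csub Cone (Cdiv B A)))
    with (Cmul (Cdiv q (Csub Cone q)) (Csub A (Cmul B Cone))) by (field; auto).
  apply (Ccv_ext _ _ _ (fun N => eq_sym (Hsum N))).
  apply Ccv_mul; [apply Ccv_const | apply Ccv_sub; [apply Ccv_const | exact (Fod_ed_remainder_cv q hq)]].
Qed.
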